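(* Let $\rho\colon\mathcal{F}\to[\Lambda]^\omega$ with $\mathcal{F}\subseteq[\Omega]^\omega$ be any partition regular function. Then the following are equivalent: (1) $\mathrm{FinBW}(\rho)$ coincides with the class of all compact metric spaces in the realm of metric spaces, i.e. a metric space belongs to $\mathrm{FinBW}(\rho)$ if and only if it is compact; (2) $[0,1]\in\mathrm{FinBW}(\rho)$; (3) $\rho^{[0,1]}\not\leq_K\rho$ (for any choice of almost disjoint family and enumeration in the definition of $\rho^{[0,1]}$).
   Context: All topological spaces are Hausdorff. Partition regular function: $\Lambda,\Omega$ countably infinite, $\mathcal{F}$ a nonempty family of infinite subsets of $\Omega$ with $F\setminus K\in\mathcal{F}$ for $F\in\mathcal{F}$, $K$ finite; $\rho\colon\mathcal{F}\to[\Lambda]^\omega$ is partition regular if (M) $E\subseteq F\Rightarrow\rho(E)\subseteq\rho(F)$; (R) if $F\in\mathcal{F}$ and $\rho(F)=A\cup B$ then some $E\in\mathcal{F}$ has $\rho(E)\subseteq A$ or $\rho(E)\subseteq B$; (S) for every $E\in\mathcal{F}$ there is $F\in\mathcal{F}$, $F\subseteq E$, such that every $a\in\rho(F)$ satisfies $a\notin\rho(F\setminus K)$ for some finite $K\subseteq\Omega$. $\rho$-convergence and $\mathrm{FinBW}(\rho)$: $f\restriction\rho(F)$ ($f\colon\Lambda\to Y$, $F\in\mathcal{F}$) $\rho$-converges to $y$ if for every neighborhood $U$ of $y$ some finite $K\subseteq\Omega$ has $f[\rho(F\setminus K)]\subseteq U$; $\mathrm{FinBW}(\rho)$ is the class of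 spaces $Y$ such that for every $f\colon\Lambda\to Y$ some $F\in\mathcal{F}$ makes $f\restriction\rho(F)$ $\rho$-convergent to a point of $Y$. Katětov order: $\rho_2\leq_K\rho_1$ if there is $f\colon\Lambda_1\to\Lambda_2$ such that for every $F_1\in\mathcal{F}_1$ there is $F_2\in\mathcal{F}_2$ such that for every finite $K_1\subseteq\Omega_1$ there is a finite $K_2\subseteq\Omega_2$ with $\rho_2(F_2\setminus K_2)\subseteq f[\rho_1(F_1\setminus K_1)]$. $\mathrm{conv}$ is the ideal on $\mathbb{Q}\cap[0,1]$ of sets covered by the ranges of finitely many sequences in $\mathbb{Q}\cap[0,1]$ convergent in $[0,1]$. Definition of $\rho^{[0,1]}$: let $\mathcal{A}=\{A_\alpha:\alpha<\mathfrak{c}\}$ be an almost disjoint family on $\omega$ (pairwise distinct infinite subsets with pairwise finite intersections). Let $X$ be the set of all $x\colon\omega\times\omega\to[0,1]\cap\mathbb{Q}$ such that: (i) for every $p\in[0,1]$ there is an open neighborhood $U$ of $p$ with $x[(\omega\setminus[0,n])\times\omega]\not\subseteq U$ for all $n$; (ii) $x$ is injective; (iii) $x[(\omega\setminus[0,n])\times\omega]\notin\mathrm{conv}$ for all $n$. Fix an enumeration $X=\{x_\alpha:\alpha<\mathfrak{c}\}$. Let $\overline{\mathcal{A}}=\{A\setminus K:A\in\mathcal{A},K\in[\omega]^{<\omega}\}$ and $\rho^{[0,1]}\colon\overline{\mathcal{A}}\to[[0,1]\cap\mathbb{Q}]^\omega$, $\rho^{[0,1]}(A_\alpha\setminus K)=x_\alpha[(\omega\setminus[0,\max(A_\alpha\cap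 K)])\times\omega]$, with $\max\emptyset=0$; here $[0,m]=\{0,\dots,m\}$. (This is a partition regular function with $\Omega=\omega$, $\Lambda=\mathbb{Q}\cap[0,1]$.) *)

From HB Require Import structures.
From mathcomp Require Import all_boot all_order all_algebra.
From mathcomp Require Import all_classical all_reals all_analysis.
Import Order.TTheory GRing.Theory Num.Theory.
Import numFieldNormedType.Exports.
Set Implicit Arguments.
Unset Strict Implicit.
Unset Printing Implicit Defensive.
Local Open Scope classical_set_scope.
Local Open Scope ring_scope.

Definition countably_infinite (T : Type) : Prop := ([set: T] #= [set: nat])%card.

(* rho : FF -> [Lambda]^omega is a partition regular function
   (rho is a total function on sets, only its values on FF matter). *)
Definition partition_regular (Omega Lambda : Type)
    (FF : set (set Omega)) (rho : set Omega -> set Lambda) : Prop :=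
  [/\ FF !=set0,
      (forall F, FF F -> infinite_set F),
      (forall F K, FF F -> finite_set K -> FF (F `\` K)) &
      (forall F, FF F -> infinite_set (rho F))] /\
  [/\
      (forall E F, FF E -> FF F -> E `<=` F -> rho E `<=` rho F),
      (forall F (A B : set Lambda), FF F -> rho F = A `|` B ->
         exists2 E, FF E & (rho E `<=` A \/ rho E `<=` B))
    &
      (forall E, FF E -> exists2 F, FF F &
         (F `<=` E /\ forall a, rho F a ->
            exists K : set Omega, finite_set K /\ ~ rho (F `\` K) a))].

Definition rho_converges (Omega Lambda : Type) (Y : topologicalType)
    (rho : set Omega -> set Lambda) (f : Lambda -> Y) (F : set Omega) (y : Y)
    : Prop :=
  forall U : set Y, nbhs y U ->
    exists K : set Omega, finite_set K /\ f @` rho (F `\` K) `<=` U.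

Definition FinBW_on (Omega Lambda : Type) (FF : set (set Omega))
    (rho : set Omega -> set Lambda) (Y : topologicalType) (A : set Y) : Prop :=
  forall f : Lambda -> Y, (forall l, A (f l)) ->
    exists2 F, FF F & exists2 y, A y & rho_converges rho f F y.

Definition FinBW (Omega Lambda : Type) (FF : set (set Omega))
    (rho : set Omega -> set Lambda) (Y : topologicalType) : Prop :=
  FinBW_on FF rho [set: Y].

Definition katetov_le (O2 L2 O1 L1 : Type)
    (FF2 : set (set O2)) (rho2 : set O2 -> set L2)
    (FF1 : set (set O1)) (rho1 : set O1 -> set L1) : Prop :=
  exists f : L1 -> L2, forall F1, FF1 F1 ->
    exists2 F2, FF2 F2 & forall K1 : set O1, finite_set K1 ->
      exists K2 : set O2, finite_set K2 /\
        rho2 (F2 `\` K2) `<=` f @` rho1 (F1 `\` K1).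

Definition Q01 := {q : rat | (0 <= q <= 1)%R}.
Definition q01r (R : realType) (q : Q01) : R := ratr (val q).

(* the ideal conv on Q cap [0,1]: sets covered by the ranges of finitely
   many sequences in Q cap [0,1] convergent (in [0,1], equivalently in R,
   since [0,1] is closed) *)
Definition conv (R : realType) (S : set Q01) : Prop :=
  exists (k : nat) (s : 'I_k -> nat -> Q01),
    (forall i, exists l : R, (fun n => q01r R (s i n)) @ \oo --> l) /\
    (forall q, S q -> exists i n, s i n = q).

Definition tail_rows (n : nat) : set (nat * nat) := [set m | (n < m.1)%N].

(* conditions (i),(ii),(iii) defining X *)
Definition goodX (R : realType) (x : nat * nat -> Q01) : Prop :=
  [/\ (forall p : R, 0 <= p <= 1 ->
         exists U : set R, [/\ open U, U p &
           forall n, ~ ((q01r R \o x) @` tail_rows n `<=` U)]),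
      injective x
    & forall n, ~ conv R (x @` tail_rows n)].

Definition Xset (R : realType) := {x : nat * nat -> Q01 | goodX R x}.

(* an almost disjoint family indexed (injectively) by I; the indexing by X
   encodes the pairing A_alpha <-> x_alpha of the two enumerations *)
Definition almost_disjoint (I : Type) (A : I -> set nat) : Prop :=
  [/\ injective A, (forall i, infinite_set (A i)) &
      forall i j, i <> j -> finite_set (A i `&` A j)].

(* n lies in omega \ [0, max S]  with max emptyset = 0 *)
Definition above_max (S : set nat) (n : nat) : Prop :=
  (0 < n)%N /\ forall k, S k -> (k < n)%N.

Definition Fbar (R : realType) (A : Xset R -> set nat) : set (set nat) :=
  [set B | exists x K, finite_set K /\ B = A x `\` K].

Definition rho01 (R : realType) (A : Xset R -> set nat) (B : set nat)
    : set Q01 :=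
  [set q | exists x K, [/\ finite_set K, B = A x `\` K &
     exists m, above_max (A x `&` K) m.1 /\ proj1_sig x m = q]].

(* (2) -> (1): the ternary map embeds the Cantor space into [0,1] as a closed
   set, so FinBW(rho) passes from [0,1] to the Cantor space and, along the
   Alexandroff-Hausdorff surjection, to every compact metric space.  A metric
   FinBW(rho) space is compact: a sequence of eps-separated points has no
   rho-convergent restriction, so the space is totally bounded, and FinBW then
   gives every ultrafilter a limit.
   (2) -> (3): applying FinBW(rho) to a Katetov witness g yields a limit y, but
   condition (i) for the point x of X picked by g keeps every tail of x away
   from some neighbourhood of y.
   (3) -> (2): let f : Lambda -> [0,1] have no rho-convergent restriction.
   Below every F in FF the values of f have two cluster points q1 <> q2 common
   to all tails of F, and every tail has infinitely many cluster points.
   Choosing points of Lambda diagonally gives x in X whose m-th row approaches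
   q1, q2 and a fresh cluster point z m: (i) holds since q1 <> q2, (iii) since
   the z m are distinct.  Rounding f to dyadic rationals with pairwise
   distinct denominators does not depend on F, and witnesses
   rho^[0,1] <=_K rho for rho^[0,1] built on a family of branches. *)

From Pilot Require Import Defs.
From HB Require Import structures.
From mathcomp Require Import all_boot all_order all_algebra.
From mathcomp Require Import all_classical all_reals all_analysis.
From mathcomp Require Import ring lra zify.
Import Order.TTheory GRing.Theory Num.Theory.
Import numFieldNormedType.Exports.
Set Implicit Arguments.
Unset Strict Implicit.
Unset Printing Implicit Defensive.
Local Open Scope classical_set_scope.
Local Open Scope ring_scope.

Lemma finite_nat_bounded (S : set nat) : finite_set S ->
  exists n, forall k, S k -> (k <= n)%N.
Proof.
move=> /finite_fsetP [X ->]; exists (\max_(i <- finmap.enum_fset X) i)%N => k Xk.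
exact: (@leq_bigmax_seq _ _ xpredT (fun i => i)).
Qed.

Lemma infinite_nat_unbounded (S : set nat) : infinite_set S ->
  forall m, exists2 a, S a & (m <= a)%N.
Proof.
move=> iS m; apply: contrapT => H; apply: iS.
apply: (@sub_finite_set _ _ `I_m) => // a Sa /=; rewrite ltnNge; apply/negP => ma.
by apply: H; exists a.
Qed.

Lemma injective_avoid_finite (T : eqType) (z : nat -> T) (k : nat)
    (l : 'I_k -> T) (n : nat) :
  injective z -> exists m, (n < m)%N /\ forall i, z m != l i.
Proof.
move=> zi; apply: contrapT => H.
have /choice[h hP] (r : 'I_k.+1) : exists i, z (n.+1 + r) = l i.
  apply: contrapT => /forallNP hr; apply: H; exists (n.+1 + r).
  by split=> [|i]; [rewrite ltnS leq_addr|apply/eqP; exact: hr].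
have hinj : injective h.
  by move=> r r' e; apply: val_inj; apply/eqP;
    rewrite -(eqn_add2l n.+1); apply/eqP/zi; rewrite hP e -hP.
by have := leq_card h hinj; rewrite !card_ord ltnn.
Qed.

Lemma injective_choice (I : countType) (T : eqType) (P : I -> T -> Prop) :
  (forall i (s : seq T), exists2 x, P i x & x \notin s) ->
  exists c : I -> T, injective c /\ forall i, P i (c i).
Proof.
move=> new; pose next i s := projT1 (cid2 (new i s)).
have [nextP next_new] : (forall i s, P i (next i s)) /\
    (forall i s, next i s \notin s) by split=> i s; rewrite /next; case: cid2.
pose fix chosen k : seq T := if k is k'.+1 then
  if pickle_inv k' is Some i then rcons (chosen k') (next i (chosen k'))
  else chosen k' else [::].
pose c i := next i (chosen (pickle i)).
have chosen_mono k k' x : (k <= k')%N -> x \in chosen k -> x \in chosen k'.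
  elim: k' => [|k' IH]; first by rewrite leqn0 => /eqP ->.
  rewrite leq_eqVlt => /predU1P[-> //|/IH xk /xk]; rewrite /=.
  by case: pickle_inv => // i; rewrite mem_rcons inE => ->; rewrite orbT.
have c_chosen i : c i \in chosen (pickle i).+1.
  by rewrite /= pickleK_inv mem_rcons inE eqxx.
exists c; split=> [i j cij|i]; last exact: nextP.
apply: (pcan_inj (@pickleK _)).
have sep a b : (pickle a < pickle b)%N -> c a != c b.
  move=> ab; apply/eqP => cab; move: (next_new b (chosen (pickle b))).
  by rewrite -/(c b) -cab (chosen_mono _ _ _ ab (c_chosen a)).
by case: (ltngtP (pickle i) (pickle j)) => [/sep|/sep|//]; rewrite cij eqxx.
Qed.

Lemma sep_radius (R : realType) (q : R) (s : seq R) : exists2 d, 0 < d &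
  forall q', q' \in s -> q' != q -> d < `|q' - q|.
Proof.
elim: s => [|a s [d d0 Hd]]; first by exists 1.
have [->|aq] := eqVneq a q.
  exists d => // q'; rewrite inE => /predU1P[->|]; first by rewrite eqxx.
  exact: Hd.
exists (Num.min d (`|a - q| / 2)).
  by rewrite lt_min d0 /= divr_gt0 // normr_gt0 subr_eq0.
move=> q'; rewrite inE => /predU1P[->|q's q'q].
  move=> _; rewrite gt_min; apply/orP; right.
  by rewrite gtr_pMr ?normr_gt0 ?subr_eq0 // invf_lt1 // ltr1n.
by rewrite gt_min (Hd _ q's q'q).
Qed.

Lemma ballR_norm (R : realType) (x y e : R) : ball x e y = (`|x - y| < e).
Proof. by rewrite -ball_normE. Qed.

Lemma double_inv_succ_lt (R : realType) (d : R) : 0 < d ->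
  exists J, forall j, (J <= j)%N -> 2 * j.+1%:R^-1 < d.
Proof.
move=> d0; have /andP[_ t2] := truncn_itv (divr_ge0 (ler0n R 2) (ltW d0)).
exists (Num.truncn (2 / d)) => j Jj.
have jl : 2 / d < j.+1%:R by apply: lt_le_trans t2 _; rewrite ler_nat ltnS.
by rewrite ltr_pdivrMr ?ltr0n //; move: jl; rewrite ltr_pdivrMr // mulrC.
Qed.

Lemma q01r_itv (R : realType) (q : Q01) : 0 <= q01r R q <= 1.
Proof.
case: q => r rp; have /andP[q0 q1] := rp; rewrite /q01r /=.
by rewrite ler0q q0 /= -(rmorph1 (@ratr R)) ler_rat.
Qed.

Lemma cover_by_convergent_limit (R : realType) (T : Type) (k : nat)
    (s : 'I_k -> nat -> T) (g : T -> R) (l : 'I_k -> R) (u : nat -> T) (z : R) :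
  (forall i, g \o s i @ \oo --> l i) -> injective u -> g \o u @ \oo --> z ->
  (forall r, exists i t, s i t = u r) -> exists i, l i = z.
Proof.
move=> sl ui uz cover; apply: contrapT => /forallNP zl.
have d0 i : 0 < `|z - l i| / 2.
  by rewrite divr_gt0 // normr_gt0 subr_eq0; apply/eqP => e; apply: (zl i).
have /choice[Ts sT] i : exists Ti, forall t, (Ti <= t)%N ->
    `|l i - g (s i t)| < `|z - l i| / 2.
  by have [Ti _ HTi] := (cvgrPdist_lt _ _).1 (sl i) _ (d0 i); exists Ti => t /HTi.
have [N _ uN] : \forall r \near \oo, forall i, `|z - g (u r)| < `|z - l i| / 2.
  by apply: filter_forall => i; apply: (cvgrPdist_lt _ _).1 uz _ (d0 i).
have /choice[it itP] r : exists p : 'I_k * nat, s p.1 p.2 = u r.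
  by have [i [t e]] := cover r; exists (i, t).
(* Late terms [u r] are far from every [l i], so they only hit terms [s i t]
   with [t < TT]: finitely many values for infinitely many injective terms. *)
pose TT := (\max_(i < k) Ts i)%N.
have itT r : ((it (N + r)).2 < TT)%N.
  rewrite ltnNge; apply/negP => Tt; move: (itP (N + r)).
  case: (it (N + r)) Tt => i t /= Tt e.
  have h1 := sT i t (leq_trans (leq_bigmax i) Tt).
  have h2 := uN (N + r) (leq_addr _ _) i.
  have := ler_distD (g (s i t)) z (l i).
  rewrite e in h1; rewrite (distrC (g (s i t))) e; lra.
pose h (r : 'I_(k * TT).+1) : 'I_k * 'I_TT := ((it (N + r)).1, Ordinal (itT r)).
have hinj : injective h.
  move=> r r' [e1 e2]; apply: val_inj; apply/eqP; rewrite -(eqn_add2l N).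
  by apply/eqP/ui; rewrite -!itP e1 e2.
by have := leq_card h hinj; rewrite card_prod !card_ord ltnn.
Qed.

Section DyadicRounding.
Variable R : realType.

(* An odd multiple of [2^-(n+2)], so that the level [n] can be read off the
   value. *)
Definition dyadic_round (n : nat) (y : R) : rat :=
  ((minn (Num.truncn (y * (2 ^ n.+1)%:R)) (2 ^ n.+1).-1).*2.+1)%:R
  / (2 ^ n.+2)%:R.

Lemma dyadic_round_itv n y : 0 <= dyadic_round n y <= 1.
Proof.
rewrite /dyadic_round divr_ge0 //= ler_pdivrMr ?ltr0n ?expn_gt0 // mul1r ler_nat.
have hM : (0 < 2 ^ n.+1)%N by rewrite expn_gt0.
have := geq_minr (Num.truncn (y * (2 ^ n.+1)%:R)) (2 ^ n.+1).-1.
rewrite [(2 ^ n.+2)%N]expnS; move: (2 ^ n.+1)%N hM (minn _ _) => a; lia.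
Qed.

Lemma odd_mul_pow2_neq a b n d :
  (a.*2.+1 * 2 ^ (n + d.+1))%N <> (b.*2.+1 * 2 ^ n)%N.
Proof.
rewrite expnD mulnCA [(b.*2.+1 * _)%N]mulnC => /eqP.
rewrite eqn_pmul2l ?expn_gt0 // => /eqP /(congr1 odd).
by rewrite oddM oddX /= ?odd_double ?andbF.
Qed.

Lemma dyadic_round_level_inj n n' y y' :
  dyadic_round n y = dyadic_round n' y' -> n = n'.
Proof.
rewrite /dyadic_round => /eqP.
rewrite eqr_div ?pnatr_eq0 ?expn_eq0 // -!natrM eqr_nat => /eqP e.
case: (ltngtP n n') => // nn'.
  have d : (n'.+2 = n.+2 + (n' - n).-1.+1)%N by lia.
  by move: e; rewrite d => /odd_mul_pow2_neq.
have d : (n.+2 = n'.+2 + (n - n').-1.+1)%N by lia.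
by move: e; rewrite d => /esym/odd_mul_pow2_neq.
Qed.

Lemma truncn_min_bounds (M : nat) (y : R) : (0 < M)%N -> 0 <= y <= 1 ->
  (minn (Num.truncn (y * M%:R)) M.-1)%:R <= y * M%:R /\
  y * M%:R <= (minn (Num.truncn (y * M%:R)) M.-1).+1%:R.
Proof.
move=> M0 /andP[y0 y1].
have /andP[t1 t2] := truncn_itv (mulr_ge0 y0 (ler0n R M)).
have yMM : y * M%:R <= M%:R by rewrite ler_piMl.
case: (leqP (Num.truncn (y * M%:R)) M.-1) => tM; first by split => //; apply: ltW.
rewrite prednK //; split => //.
by apply: le_trans t1; rewrite ler_nat; apply: ltnW.
Qed.

Lemma dyadic_round_dist n y : 0 <= y <= 1 ->
  `|ratr (dyadic_round n y) - y| <= n.+1%:R^-1.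
Proof.
move=> y01; have M0 : (0 < 2 ^ n.+1)%N by rewrite expn_gt0.
have [+ +] := truncn_min_bounds M0 y01; rewrite /dyadic_round.
set k := minn _ _; rewrite [(2 ^ n.+2)%N]expnS.
have : (n.+1 < 2 * 2 ^ n.+1)%N by have := ltn_expl n.+1 (isT : 1 < 2)%N; lia.
move: M0; move: (2 ^ n.+1)%N k => M k M0 nM lo hi.
rewrite fmorph_div /= !ratr_nat -addn1 natrD in hi *.
have Mr : 0 < (M%:R : R) by rewrite ltr0n.
have -> : (k.*2.+1)%:R / (2 * M)%:R - y =
    (k%:R + 2^-1 - y * M%:R) * (M%:R : R)^-1.
  rewrite natrM -[(k.*2.+1)%N]addn1 natrD -muln2 natrM.
  by field; rewrite pnatr_eq0 -lt0n.
rewrite normrM (@gtr0_norm _ (M%:R^-1)) ?invr_gt0 //.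
have h : `|k%:R + 2^-1 - y * M%:R| <= 2^-1 :> R.
  by rewrite ler_norml; apply/andP; split; lra.
have Mi : 0 < (M%:R : R)^-1 by rewrite invr_gt0.
apply: le_trans (ler_wpM2r (ltW Mi) h) _.
rewrite -invfM -natrM mul2n lef_pV2 ?posrE ?ltr0n ?double_gt0 //.
by rewrite ler_nat -mul2n ltnW.
Qed.

End DyadicRounding.

Lemma cantor_prefix_near (b : cantor_space) (n : nat) :
  \forall c \near b, forall i, (i < n)%N -> b i = c i.
Proof.
elim: n => [|n IH]; first by near=> z => ?; rewrite ltn0.
near=> z => i; rewrite leq_eqVlt => /predU1P[[->]|iSn]; last by rewrite (near IH z).
near: z; exists (proj n @^-1` [set b n]); split => //.
suff : @open cantor_space (proj n @^-1` [set b n]) by [].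
apply: open_comp; [move=> + _; exact: proj_continuous|exact: discrete_open].
Unshelve. all: end_near. Qed.

Section Ternary.
Variable R : realType.

Definition tern_weight (i : nat) : R := 2 / 3 ^+ i.+1.

Definition tern_partial (s : cantor_space) (n : nat) : R :=
  \sum_(0 <= i < n) (if s i then tern_weight i else 0).

Definition ternary (s : cantor_space) : R := sup (range (tern_partial s)).

Lemma sum_tern_weight n m :
  \sum_(n <= i < n + m) tern_weight i = (3 ^+ n)^-1 - (3 ^+ (n + m))^-1.
Proof.
elim: m => [|m IH]; first by rewrite addn0 big_geq // subrr.
rewrite addnS big_nat_recr ?leq_addr //= IH /tern_weight exprS.
have h3n : (3 ^+ (n + m) : R) != 0 by rewrite expf_neq0.
have h3n' : (3 ^+ n : R) != 0 by rewrite expf_neq0.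
by field; rewrite h3n h3n'.
Qed.

Lemma tern_partial_split s n m : tern_partial s (n + m) =
  tern_partial s n + \sum_(n <= i < n + m) (if s i then tern_weight i else 0).
Proof. by rewrite /tern_partial (@big_cat_nat _ _ _ n) // leq_addr. Qed.

Lemma tern_tail_itv s n m :
  0 <= \sum_(n <= i < n + m) (if s i then tern_weight i else 0) <= (3 ^+ n)^-1.
Proof.
have w0 i : 0 <= tern_weight i by rewrite divr_ge0 // exprn_ge0.
apply/andP; split; first by apply: sumr_ge0 => i _; case: (s i).
apply: le_trans (_ : \sum_(n <= i < n + m) tern_weight i <= _).
  by apply: ler_sum => i _; case: (s i).
by rewrite sum_tern_weight gerBl invr_ge0 exprn_ge0.
Qed.

Lemma tern_partial_le s n n' : tern_partial s n' <= tern_partial s n + (3 ^+ n)^-1.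
Proof.
have [nn'|n'n] := leqP n n'.
  rewrite -(subnKC nn') tern_partial_split lerD2l.
  by have /andP[] := tern_tail_itv s n (n' - n).
rewrite -(subnKC (ltnW n'n)) tern_partial_split -addrA lerDl.
have /andP[tail0 _] := tern_tail_itv s n' (n - n').
by rewrite addr_ge0 // invr_ge0 exprn_ge0.
Qed.

Lemma ternary_has_sup s : has_sup (range (tern_partial s)).
Proof.
split; first by exists (tern_partial s 0); exists 0%N.
exists (tern_partial s 0 + 1) => _ [n _ <-].
by have := tern_partial_le s 0 n; rewrite expr0 invr1.
Qed.

Lemma tern_partial_le_ternary s n : tern_partial s n <= ternary s.
Proof. by apply: sup_upper_bound; [exact: ternary_has_sup|exists n]. Qed.

Lemma ternary_le_partial s n : ternary s <= tern_partial s n + (3 ^+ n)^-1.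
Proof.
apply: ge_sup; first by exists (tern_partial s 0); exists 0%N.
by move=> _ [n' _ <-]; apply: tern_partial_le.
Qed.

Lemma ternary_itv s : 0 <= ternary s <= 1.
Proof.
have := tern_partial_le_ternary s 0; have := ternary_le_partial s 0.
by rewrite /tern_partial big_geq // expr0 invr1 add0r => h1 h2; apply/andP.
Qed.

Lemma tern_partial_prefix s t n : (forall i, (i < n)%N -> s i = t i) ->
  tern_partial s n = tern_partial t n.
Proof. by move=> st; apply: eq_big_nat => i /andP[_ /st ->]. Qed.

Lemma ternary_close s t n : (forall i, (i < n)%N -> s i = t i) ->
  `|ternary s - ternary t| <= (3 ^+ n)^-1.
Proof.
move=> /tern_partial_prefix e.
have := tern_partial_le_ternary s n; have := ternary_le_partial s n.
have := tern_partial_le_ternary t n; have := ternary_le_partial t n.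
rewrite e ler_norml => *; apply/andP; split; lra.
Qed.

Lemma inv_pow3_lt (e : R) : 0 < e -> exists n, (3 ^+ n)^-1 < e.
Proof.
move=> e0; have [J HJ] := double_inv_succ_lt e0; exists J.
apply: le_lt_trans (HJ J (leqnn J)).
apply: le_trans (_ : J.+1%:R^-1 <= _); last by rewrite ler_peMl ?invr_ge0 ?ler1n.
by rewrite lef_pV2 ?posrE ?exprn_gt0 ?ltr0n // -natrX ler_nat ltn_expl.
Qed.

Lemma ternary_continuous : continuous ternary.
Proof.
move=> s V /nbhs_ballP [e /= e0 bV]; have [n hn] := inv_pow3_lt e0.
apply: filterS (cantor_prefix_near s n) => t st /=; apply: bV.
by rewrite ballR_norm; apply: le_lt_trans (ternary_close st) hn.
Qed.

Lemma ternary_lt s t d : (forall i, (i < d)%N -> s i = t i) ->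
  s d = true -> t d = false -> ternary t < ternary s.
Proof.
move=> st sd td.
have := tern_partial_le_ternary s d.+1; have := ternary_le_partial t d.+1.
rewrite /tern_partial !big_nat_recr //= sd td addr0 -/(tern_partial s d).
rewrite -/(tern_partial t d) -(tern_partial_prefix st) /tern_weight => h1 h2.
apply: le_lt_trans h1 _; apply: lt_le_trans h2; rewrite ltrD2l.
by rewrite -[X in X < _]mul1r ltr_pM2r ?ltr1n // invr_gt0 exprn_gt0.
Qed.

Lemma ternary_inj : injective ternary.
Proof.
move=> s t e; apply: contrapT => ne.
have [d sd dmin] : exists2 d, s d != t d & forall i, (i < d)%N -> s i = t i.
  have hd : exists d, s d != t d.
    apply: contrapT => /forallNP H; apply/ne/funext => d.
    by apply/eqP; apply: contrapT => /negP; apply: H.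
  case: (ex_minnP hd) => d sd dmin; exists d => // i id.
  by apply/eqP; apply: contrapT => /negP /dmin; rewrite leqNgt id.
move: sd; case sdE: (s d); case tdE: (t d) => // _.
  by have := ternary_lt dmin sdE tdE; rewrite e ltxx.
have dmin' i : (i < d)%N -> t i = s i by move=> /dmin ->.
by have := ternary_lt dmin' tdE sdE; rewrite e ltxx.
Qed.

End Ternary.

Section Branches.
Variables (I : Type) (code : I -> nat -> nat).
Hypothesis code_inj : injective code.

Definition branch (i : I) : set nat := range (fun n => pickle (mkseq (code i) n)).

Lemma pickle_mkseq_inj (g : nat -> nat) : injective (fun n => pickle (mkseq g n)).
Proof. by move=> a b /(pcan_inj (@pickleK _)) /(congr1 size); rewrite !size_mkseq. Qed.

Lemma branch_infinite i : infinite_set (branch i).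
Proof.
move=> fin; apply: infinite_nat.
have -> : [set: nat] = (fun n => pickle (mkseq (code i) n)) @^-1` branch i.
  by apply/seteqP; split => // n _; exists n.
by apply: finite_preimage => // a b _ _; apply: pickle_mkseq_inj.
Qed.

Lemma branch_meet_finite i j : i <> j -> finite_set (branch i `&` branch j).
Proof.
move=> ij; have [d hd] : exists d, code i d <> code j d.
  by apply: contrapT => /forallNP H; apply/ij/code_inj/funext => d; exact: contrapT.
apply: (@sub_finite_set _ _ ((fun n => pickle (mkseq (code i) n)) @` `I_d.+1)).
  move=> _ [[n _ <-] [n' _ /(pcan_inj (@pickleK _)) e]].
  exists n => //=; rewrite ltnS leqNgt; apply/negP => dn.
  have nn : n' = n by have := congr1 size e; rewrite !size_mkseq.
  subst n'; have := congr1 (fun s => nth 0%N s d) e.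
  by rewrite !nth_mkseq // => /esym.
exact: finite_image.
Qed.

Lemma branch_almost_disjoint : almost_disjoint branch.
Proof.
split; [|exact: branch_infinite|exact: branch_meet_finite].
move=> i j e; apply: contrapT => /branch_meet_finite.
by rewrite e setIid; apply: branch_infinite.
Qed.

End Branches.

Definition xcode (R : realType) (x : Xset R) (k : nat) : nat :=
  if pickle_inv k is Some p then pickle (proj1_sig x p) else 0%N.

Lemma xcode_inj (R : realType) : injective (@xcode R).
Proof.
move=> [x hx] [y hy] e.
have exy : x = y.
  apply: funext => p; have := congr1 (fun g => g (pickle p)) e.
  by rewrite /xcode /= pickleK_inv; apply: (pcan_inj (@pickleK _)).
by subst y; congr exist; exact: Prop_irrelevance.
Qed.

Lemma finBW01_not_katetov (R : realType) (Omega Lambda : Type)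
    (FF : set (set Omega)) (rho : set Omega -> set Lambda) (A : Xset R -> set nat) :
  FinBW_on FF rho [set x : R | 0 <= x <= 1] -> ~ katetov_le (Fbar A) (rho01 A) FF rho.
Proof.
move=> bw [g Hg].
have [F1 FF1 [y y01 cv]] := bw (q01r R \o g) (fun l => q01r_itv R (g l)).
have [_ [x [K [finK ->]]] H] := Hg F1 FF1.
have [condi _ _] := proj2_sig x; have [U [oU Uy nU]] := condi y y01.
have [K1 [finK1 sub1]] := cv U (open_nbhs_nbhs (conj oU Uy)).
have [K2 [finK2 sub2]] := H K1 finK1.
have [n bn] : exists n, forall k, (A x `&` (K `|` K2)) k -> (k <= n)%N.
  by apply: finite_nat_bounded; apply: finite_setIr; rewrite finite_setU.
apply: (nU n) => _ [m /= nm <-].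
have : rho01 A (A x `\` K `\` K2) (proj1_sig x m).
  exists x, (K `|` K2); split; [by rewrite finite_setU|by rewrite setDDl|].
  exists m; split => //; split=> [|k /bn kn]; exact: leq_ltn_trans nm.
by move=> /sub2 [l rl <-]; apply: sub1; exists l.
Qed.

(* [cantor_surj] is stated for pointed spaces; [pointed_at y] is [Y] pointed
   at [y]. *)
Definition pointed_at (T : Type) (t : T) : Type := T.
HB.instance Definition _ (R : realType) (Y : pseudoMetricType R) (y : Y) :=
  PseudoMetric.on (pointed_at y).
HB.instance Definition _ (R : realType) (Y : pseudoMetricType R) (y : Y) :=
  isPointed.Build (pointed_at y) y.

Lemma cantor_surj_inhabited (R : realType) (Y : pseudoMetricType R) (y : Y) :
  compact [set: Y] -> hausdorff_space Y ->
  exists p : cantor_space -> Y, continuous p /\ forall z : Y, exists c, p c = z.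
Proof.
move=> cY hY; have [p cp] := @cantor_surj R (pointed_at y) cY hY.
by exists p; split => // z; have [c _ <-] := (@surj _ _ _ _ p) z I; exists c.
Qed.

Section PartitionRegular.
Variables (Omega Lambda : Type) (FF : set (set Omega)) (rho : set Omega -> set Lambda).
Hypothesis PR : partition_regular FF rho.

Lemma FF_neq0 : FF !=set0.
Proof. by case: PR => -[]. Qed.

Lemma FF_setD F K : FF F -> finite_set K -> FF (F `\` K).
Proof. by case: PR => -[_ _ H _] _; apply: H. Qed.

Lemma rho_infinite F : FF F -> infinite_set (rho F).
Proof. by case: PR => -[_ _ _ H] _; apply: H. Qed.

Lemma rho_mono E F : FF E -> FF F -> E `<=` F -> rho E `<=` rho F.
Proof. by case: PR => _ [H _ _]; apply: H. Qed.

Lemma rho_split F (A B : set Lambda) : FF F -> rho F = A `|` B ->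
  exists2 E, FF E & (rho E `<=` A \/ rho E `<=` B).
Proof. by case: PR => _ [_ H _]; apply: H. Qed.

Lemma rho_shrink E : FF E -> exists2 F, FF F &
  (F `<=` E /\ forall a, rho F a -> exists K, finite_set K /\ ~ rho (F `\` K) a).
Proof. by case: PR => _ [_ _ H]; apply: H. Qed.

Lemma rho_setD_sub F K : FF F -> finite_set K -> rho (F `\` K) `<=` rho F.
Proof. by move=> FFF fK; apply: rho_mono (FF_setD FFF fK) FFF _ => x []. Qed.

Lemma rho_setD_neq0 F K : FF F -> finite_set K -> rho (F `\` K) !=set0.
Proof. by move=> FFF fK; apply/infinite_setN0/rho_infinite/FF_setD. Qed.

Lemma finBW_continuous_image (X Y : topologicalType) (p : X -> Y) :
  continuous p -> (forall y, exists x, p x = y) -> FinBW FF rho X -> FinBW FF rho Y.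
Proof.
move=> cp /choice[q pq] bw h _.
have [F FFF [s _ cv]] := bw (q \o h) (fun=> I).
exists F => //; exists (p s) => // V /(cp s)/cv[K [fK sub]].
by exists K; split => // _ [l rl <-]; rewrite -[h l]pq; apply: sub; exists l.
Qed.

Lemma finBW_closed_embedding (X Y : topologicalType) (A : set Y) (e : X -> Y) :
  compact [set: X] -> hausdorff_space Y -> continuous e -> injective e ->
  (forall x, A (e x)) -> FinBW_on FF rho A -> FinBW FF rho X.
Proof.
move=> cX hY ce ei eA bw k _.
have [F FFF [y _ cv]] := bw (e \o k) (fun l => eA (k l)).
have closed_img (C : set X) : closed C -> closed (e @` C).
  move=> cC; apply: (compact_closed hY); apply: continuous_compact.
    exact: continuous_subspaceT.
  exact: subclosed_compact cC cX _.
have [s _ ys] : (e @` [set: X]) y.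
  apply: (closed_img _ closedT) => B /cv[K [fK sub]].
  have [l rl] := rho_setD_neq0 FFF fK.
  by exists (e (k l)); split; [exists (k l)|apply: sub; exists l].
exists F => //; exists s => // V; rewrite nbhsE => -[W [oW Ws] WV].
have nC : nbhs y (~` (e @` (~` W))).
  apply: open_nbhs_nbhs; split; first exact/closed_openC/closed_img/open_closedC.
  by rewrite -ys => -[c nWc /ei cs]; apply: nWc; rewrite cs.
have [K [fK sub]] := cv _ nC.
exists K; split => // _ [l rl <-]; apply: WV; apply: contrapT => nW.
by apply: (sub (e (k l))); [exists l|exists (k l)].
Qed.

Lemma finBW01_cantor (R : realType) :
  FinBW_on FF rho [set x : R | 0 <= x <= 1] -> FinBW FF rho cantor_space.
Proof.
exact: (finBW_closed_embedding cantor_space_compact (@Rhausdorff R)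
  (@ternary_continuous R) (@ternary_inj R) (@ternary_itv R)).
Qed.

Lemma compact_finBW (R : realType) (Y : pseudoMetricType R) :
  hausdorff_space Y -> compact [set: Y] ->
  FinBW_on FF rho [set x : R | 0 <= x <= 1] -> FinBW FF rho Y.
Proof.
move=> hY cY /finBW01_cantor bw h.
have [F FFF] := FF_neq0; have [l0 _] := infinite_setN0 (rho_infinite FFF).
have [p [cp sp]] := cantor_surj_inhabited (h l0) cY hY.
exact: finBW_continuous_image cp sp bw h.
Qed.

End PartitionRegular.

Lemma rho01_setD1 (R : realType) (A : Xset R -> set nat) x a q :
  almost_disjoint A -> A x a -> rho01 A (A x `\` [set a]) q ->
  exists2 p, (a < p.1)%N & proj1_sig x p = q.
Proof.
move=> [_ Ainf Afin] Axa [x' [K' [fK' e [p [[_ pab] <-]]]]].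
have xx' : x' = x.
  apply: contrapT => ne; apply: (infinite_setD (Ainf x) (finite_set1 a)).
  apply: (sub_finite_set _ (Afin _ _ ne)) => w h; split; last by case: h.
  by rewrite e in h; case: h.
subst x'; exists p => //; apply: pab; split => //.
apply: contrapT => nK; have : (A x `\` K') a by [].
by rewrite -e => -[_ /=]; apply.
Qed.

Section Countable.
Variables (Omega Lambda : Type) (FF : set (set Omega)) (rho : set Omega -> set Lambda).
Hypotheses (cO : countably_infinite Omega) (cL : countably_infinite Lambda)
  (PR : partition_regular FF rho).

Definition codeL : Lambda -> nat := projT1 (cid (elimT card_set_bijP cL)).

Lemma codeL_inj : injective codeL.
Proof.
by rewrite /codeL; case: cid => f [_ fi _] /= a b /fi; apply; rewrite in_setT.
Qed.

Definition codeO : Omega -> nat := projT1 (cid (elimT card_set_bijP cO)).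

Lemma codeO_inj : injective codeO.
Proof.
by rewrite /codeO; case: cid => f [_ fi _] /= a b /fi; apply; rewrite in_setT.
Qed.

Definition initial (m : nat) : set Omega := codeO @^-1` `I_m.

Lemma initial_finite m : finite_set (initial m).
Proof. by apply: finite_preimage => // a b _ _ /codeO_inj. Qed.

Lemma initial_mono m m' : (m <= m')%N -> initial m `<=` initial m'.
Proof. by move=> mm' w /= wm; apply: leq_trans mm'. Qed.

Lemma finite_sub_initial K : finite_set K -> exists m, K `<=` initial m.
Proof.
move=> /(finite_image codeO)/finite_nat_bounded [n bn].
by exists n.+1 => w Kw; rewrite /initial /= ltnS; apply: bn; exists w.
Qed.

Lemma infinite_codeL_unbounded (P : set Lambda) : infinite_set P ->
  forall N, exists l, P l /\ (N <= codeL l)%N.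
Proof.
move=> iP N; apply: contrapT => H; apply: iP.
apply: (@sub_finite_set _ _ (codeL @^-1` `I_N)).
  by move=> l Pl /=; rewrite ltnNge; apply/negP => Nl; apply: H; exists l.
by apply: finite_preimage => // a b _ _ /codeL_inj.
Qed.

Lemma rho_codeL_unbounded E : FF E -> forall N, exists l, rho E l /\ (N <= codeL l)%N.
Proof. by move=> /(rho_infinite PR); apply: infinite_codeL_unbounded. Qed.

Lemma rho_tail_mono F m m' l : FF F -> (m <= m')%N ->
  rho (F `\` initial m') l -> rho (F `\` initial m) l.
Proof.
move=> FFF mm'; have fin := initial_finite.
apply: (rho_mono PR (FF_setD PR FFF (fin m')) (FF_setD PR FFF (fin m))).
by move=> w [Fw nw]; split => // /(initial_mono mm').
Qed.

(* A uniform version of (S): removing a long enough initial segment of [F]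
   pushes [rho F] beyond any given code. *)
Definition tail_avoiding (F : set Omega) := FF F /\
  forall N, exists m, forall l, rho (F `\` initial m) l -> (N <= codeL l)%N.

Lemma tail_avoiding_refine E : FF E -> exists F, [/\ FF F, F `<=` E & tail_avoiding F].
Proof.
move=> FFE; have [F FFF [FE Fsh]] := rho_shrink PR FFE.
have /choice[K HK] a : exists K, finite_set K /\ (rho F a -> ~ rho (F `\` K) a).
  have [/Fsh [K [fK nK]]|nF] := pselect (rho F a); first by exists K.
  by exists set0.
exists F; split => //; split => // N.
have /finite_sub_initial[m Km] : finite_set (\bigcup_(a in codeL @^-1` `I_N) K a).
  apply: bigcup_finite => [|a _]; last exact: (HK a).1.
  by apply: finite_preimage => // a b _ _ /codeL_inj.
exists m => l rl; rewrite leqNgt; apply/negP => lN.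
have rF : rho F l := rho_setD_sub PR FFF (initial_finite m) rl.
have [fKl /(_ rF)] := HK l; apply; move: rl.
apply: (rho_mono PR (FF_setD PR FFF (initial_finite m)) (FF_setD PR FFF fKl)).
by move=> w [Fw nw]; split => // Kw; apply/nw/Km; exists l.
Qed.

Section FinBWCompact.
Variables (R : realType) (Y : pseudoMetricType R).
Hypothesis bwY : FinBW FF rho Y.

Lemma finBW_totally_bounded (eps : R) : 0 < eps ->
  exists s : seq Y, forall y, exists2 c, c \in s & ball c eps y.
Proof.
move=> e0; apply: contrapT => /forallNP H.
have /choice[next nextP] (s : seq Y) : exists y, forall c, c \in s -> ~ ball c eps y.
  apply: contrapT => /forallNP H2; apply: (H s) => y.
  by apply: contrapT => H3; apply: (H2 y) => c cs bc; apply: H3; exists c.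
pose fix pts n := if n is n'.+1 then rcons (pts n') (next (pts n')) else [::].
have pts_next k n : (k < n)%N -> next (pts k) \in pts n.
  elim: n => // n IH; rewrite ltnS leq_eqVlt => /predU1P[->|kn] /=.
    by rewrite mem_rcons inE eqxx.
  by rewrite mem_rcons inE IH ?orbT.
have sep k n : (k < n)%N -> ~ ball (next (pts k)) eps (next (pts n)).
  by move=> /pts_next; apply: nextP.
have [F FFF [y _ cv]] := bwY (f := fun l => next (pts (codeL l))) (fun=> I).
have [K [fK sub]] := cv _ (nbhsx_ballx y _ (divr_gt0 e0 (ltr0n R 2))).
have iP := rho_infinite PR (FF_setD PR FFF fK).
have [l1 r1] := infinite_setN0 iP.
have [l2 [r2 /= n2]] := infinite_setN0 (infinite_setD iP (finite_set1 l1)).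
have b1 : ball y (eps / 2) (next (pts (codeL l1))) by apply: sub; exists l1.
have b2 : ball y (eps / 2) (next (pts (codeL l2))) by apply: sub; exists l2.
have [lt|lt|/codeL_inj e] := ltngtP (codeL l1) (codeL l2).
- exact: sep lt (ball_splitr b1 b2).
- exact: sep lt (ball_splitr b2 b1).
- exact: n2.
Qed.

Lemma ultra_cover_ball (U : set_system Y) (e : R) (s : seq Y) : UltraFilter U ->
  U [set y | exists2 c, c \in s & ball c e y] -> exists2 c, c \in s & U (ball c e).
Proof.
move=> UU; elim: s => [|c s IH] Hs.
  by exfalso; apply: (@filter_not_empty _ U _); apply: filterS Hs => y [c].
have [Uc|Unc] := in_ultra_setVsetC (ball c e) UU.
  by exists c => //; rewrite inE eqxx.
have [c' c's Uc'] : exists2 c', c' \in s & U (ball c' e).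
  apply: IH; apply: filterS (filterI Unc Hs).
  by move=> y [nb [c'']]; rewrite inE => /predU1P[->//|c''s] b; exists c''.
by exists c' => //; rewrite inE c's orbT.
Qed.

Lemma finBW_compact : compact [set: Y].
Proof.
rewrite compact_ultra => U UU _.
have /choice[ctr ctrP] n : exists c, U (ball c n.+1%:R^-1).
  have npos : 0 < (n.+1%:R^-1 : R) by rewrite invr_gt0 ltr0n.
  have [s Hs] := finBW_totally_bounded npos.
  have [c _ Uc] := ultra_cover_ball UU (filterS (fun y _ => Hs y) filterT).
  by exists c.
have [F FFF [y _ cv]] := bwY (f := ctr \o codeL) (fun=> I).
exists y; split => // V /nbhs_ballP [e /= e0 bV].
have [N HN] := double_inv_succ_lt e0.
have e2 : 0 < e / 2 by rewrite divr_gt0.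
have [K [fK sub]] := cv _ (nbhsx_ballx y _ e2).
have [l [rl Nl]] := rho_codeL_unbounded (FF_setD PR FFF fK) N.
have yc : ball y (e / 2) (ctr (codeL l)) by apply: sub; exists l.
apply: filterS (ctrP (codeL l)) => w cw; apply: bV.
apply: le_ball (ball_triangle yc cw); rewrite [X in _ <= X](splitr e) lerD2l.
by rewrite ler_pdivlMr // mulrC; apply/ltW/HN.
Qed.

End FinBWCompact.

Definition tail_filter (F : set Omega) : set_system Lambda :=
  filter_from [set: nat] (fun m => rho (F `\` initial m)).

Lemma tail_filter_proper F : FF F -> ProperFilter (tail_filter F).
Proof.
move=> FFF; apply: filter_from_proper => [|m _]; last first.
  by have := rho_setD_neq0 PR FFF (initial_finite m).
apply: filter_from_filter; first by exists 0%N.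
move=> i j _ _; exists (maxn i j) => // l rl.
by split; [exact: rho_tail_mono FFF (leq_maxl i j) rl|
           exact: rho_tail_mono FFF (leq_maxr i j) rl].
Qed.

Section NotFinBW.
Variables (R : realType) (f : Lambda -> R).
Hypotheses (f01 : forall l, 0 <= f l <= 1)
  (f_div : forall F y, FF F -> 0 <= y <= 1 -> ~ rho_converges rho f F y).

Definition cluster_value (P : set Lambda) (z : R) := forall eps, 0 < eps ->
  forall N, exists l, [/\ P l, (N <= codeL l)%N & `|f l - z| < eps].

Lemma cluster_value_sub P Q z : P `<=` Q -> cluster_value P z -> cluster_value Q z.
Proof.
move=> PQ cP eps e0 N; have [l [Pl Nl fl]] := cP eps e0 N.
by exists l; split => //; apply: PQ.
Qed.

Lemma exists_cluster_value P : (forall N, exists l, P l /\ (N <= codeL l)%N) ->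
  exists z, 0 <= z <= 1 /\ cluster_value P z.
Proof.
move=> Pu; pose tl N := [set l | P l /\ (N <= codeL l)%N].
pose G := filter_from [set: nat] tl.
have GF : ProperFilter G.
  apply: filter_from_proper => [|N _]; last by have [l] := Pu N; exists l.
  apply: filter_from_filter; first by exists 0%N.
  move=> i j _ _; exists (maxn i j) => // l [Pl].
  by rewrite geq_max => /andP[il jl].
have G01 : (f @ G) `[0, 1]%classic.
  by exists 0%N => // l _ /=; rewrite in_itv /=; exact: f01.
have [z [z01 clz]] := segment_compact _ G01.
exists z; split; first by move: z01; rewrite /= in_itv.
move=> eps e0 N.
have fA : (f @ G) (f @` tl N) by exists N => // l Hl; exists l.
have [_ [[l [Pl Nl] <-] bz]] := clz _ _ fA (nbhsx_ballx z eps e0).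
by exists l; split => //; rewrite distrC -ballR_norm.
Qed.

Lemma cluster_tail_filter F q : tail_avoiding F ->
  cluster (f @ tail_filter F) q -> forall m, cluster_value (rho (F `\` initial m)) q.
Proof.
move=> [FFF TAF] clq m eps e0 N; have [m' Hm'] := TAF N.
have fA : (f @ tail_filter F) (f @` rho (F `\` initial (maxn m m'))).
  by exists (maxn m m') => // l Hl; exists l.
have [_ [[l rl <-] ql]] := clq _ _ fA (nbhsx_ballx q eps e0).
exists l; split; first exact: rho_tail_mono FFF (leq_maxl m m') rl.
  exact/Hm'/(rho_tail_mono FFF (leq_maxr m m') rl).
by rewrite distrC -ballR_norm.
Qed.

(* If [q1] were the only cluster point of [f] along the tails of [F], the
   compactness of [[-1, 2]] would make [f] rho-converge to [q1] on [F]. *)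
Lemma two_tail_cluster_values F : tail_avoiding F -> exists q1 q2, q1 != q2 /\
  forall m, cluster_value (rho (F `\` initial m)) q1 /\
            cluster_value (rho (F `\` initial m)) q2.
Proof.
move=> TAF; have [FFF _] := TAF; have GF := tail_filter_proper FFF.
have fG (V : set R) : (forall l, V (f l)) -> (f @ tail_filter F) V.
  by move=> HV; exists 0%N => // l _; apply: HV.
have G01 : (f @ tail_filter F) `[0, 1]%classic.
  by apply: fG => l; rewrite /= in_itv /=; exact: f01.
have [q1 [q101 clq1]] := segment_compact _ G01.
have [[q2 [clq2 q21]]|none] :=
  pselect (exists q2, cluster (f @ tail_filter F) q2 /\ q2 != q1).
  exists q1, q2; rewrite eq_sym; split => // m.
  by split; apply: cluster_tail_filter.
exfalso; move: q101; rewrite /= in_itv /= => q101.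
have cl1 : cluster (f @ tail_filter F) = [set q1].
  apply/seteqP; split => [q clq|q -> //]; apply/eqP; apply: contrapT => /negP nq.
  by apply: none; exists q.
have nV : nbhs q1 `[-1, 2]%classic.
  apply/nbhs_ballP; exists 1 => //= z; rewrite ballR_norm ltr_distlC => /andP[a b].
  by rewrite /= in_itv /=; apply/andP; split; lra.
have V12 : (f @ tail_filter F) `[-1, 2]%classic.
  apply: fG => l; rewrite /= in_itv /=; have /andP[h0 h1] := f01 l.
  by apply/andP; split; lra.
have cv : f @ tail_filter F --> q1.
  apply: (@compact_cluster_set1 _ q1 _ `[-1, 2]%classic) => //.
  exact: segment_compact.
apply: (f_div FFF q101) => U /cv[m _ Hm].
by exists (initial m); split => [|_ [l rl <-]]; [exact: initial_finite|exact: Hm].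
Qed.

Lemma not_unique_cluster_value E q : FF E ->
  (forall z, cluster_value (rho E) z -> z = q) -> False.
Proof.
move=> FFE Hq; have [F [FFF FE TAF]] := tail_avoiding_refine FFE.
have [q1 [q2 [q12 /(_ 0%N)[c1 c2]]]] := two_tail_cluster_values TAF.
have sub : rho (F `\` initial 0) `<=` rho E.
  by apply: (rho_mono PR (FF_setD PR FFF (initial_finite 0)) FFE) => w [/FE].
move: q12; rewrite (Hq _ (cluster_value_sub sub c1)).
by rewrite (Hq _ (cluster_value_sub sub c2)) eqxx.
Qed.

Lemma no_finite_cluster_values (s : seq R) E : FF E ->
  (forall z, cluster_value (rho E) z -> z \in s) -> False.
Proof.
elim: s E => [|q s IH] E FFE Hs.
  by have [z [_ /Hs]] := exists_cluster_value (rho_codeL_unbounded FFE).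
(* Split [rho E] by the distance of [f] to [q]: on the near part [q] is the
   only possible cluster value, on the far part [q] is none. *)
have [d d0 Hd] := sep_radius q s.
pose near := [set l | `|f l - q| < d / 2].
have [E' FFE' [Enear|Efar]] := rho_split PR FFE (esym (setUIDK (rho E) near)).
- apply: (not_unique_cluster_value FFE') => z cz; apply/eqP.
  apply: contrapT => /negP zq.
  have /(Hd _)/(_ zq) dz : z \in s.
    have := Hs z (cluster_value_sub (fun l h => proj1 (Enear l h)) cz).
    by rewrite inE (negbTE zq).
  have e0 : 0 < `|z - q| - d / 2.
    by rewrite subr_gt0 (lt_trans _ dz) // ltr_pdivrMr // ltr_pMr // ltr1n.
  have [l [/Enear[_ fq] _ fl]] := cz _ e0 0%N.
  have := ler_distD (f l) z q; rewrite distrC in fl; rewrite /near /= in fq; lra.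
- apply: (IH E' FFE') => z cz.
  have := Hs z (cluster_value_sub (fun l h => proj1 (Efar l h)) cz).
  rewrite inE => /predU1P[zq|//]; subst z.
  have [l [/Efar[_ /= fq] _ fl]] := cz (d / 2) (divr_gt0 d0 (ltr0n _ 2)) 0%N.
  by exfalso; apply: fq.
Qed.

Lemma cluster_value_notin E (s : seq R) : FF E ->
  exists2 z, cluster_value (rho E) z & z \notin s.
Proof.
move=> FFE; apply: contrapT => H.
apply: (no_finite_cluster_values (s := s) FFE) => z cz.
by apply: contrapT => /negP zs; apply: H; exists z.
Qed.

Definition dyadic_code (l : Lambda) : Q01 :=
  exist _ (dyadic_round (codeL l) (f l)) (dyadic_round_itv (codeL l) (f l)).

Lemma dyadic_code_inj : injective dyadic_code.
Proof. by move=> a b /(congr1 val) /= /dyadic_round_level_inj /codeL_inj. Qed.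

Lemma dyadic_code_dist l : `|q01r R (dyadic_code l) - f l| <= (codeL l).+1%:R^-1.
Proof. exact: dyadic_round_dist. Qed.

(* The columns aiming at [z m] separate the rows in the limit (condition
   (iii)); those aiming at [q1] and [q2] keep each row away from every single
   point (condition (i)). *)
Definition target (q1 q2 : R) (z : nat -> R) (p : nat * nat) : R :=
  if (p.2 %% 3 == 0)%N then z p.1 else if (p.2 %% 3 == 1)%N then q1 else q2.

Lemma exists_row_choice F q1 q2 z : FF F ->
  (forall p, cluster_value (rho (F `\` initial p.1)) (target q1 q2 z p)) ->
  exists lp : nat * nat -> Lambda, [/\ injective lp,
    forall p, rho (F `\` initial p.1) (lp p), forall p, (p.2 <= codeL (lp p))%N
    & forall p, `|f (lp p) - target q1 q2 z p| < p.2.+1%:R^-1].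
Proof.
move=> FFF cv.
pose good p l := [/\ rho (F `\` initial p.1) l, (p.2 <= codeL l)%N
  & `|f l - target q1 q2 z p| < p.2.+1%:R^-1].
have [c [c_inj cP]] : exists c : nat * nat -> nat, injective c /\
    forall p, exists l, codeL l = c p /\ good p l.
  apply: (injective_choice (P := fun p n => exists l, codeL l = n /\ good p l)).
  move=> p s; have npos : 0 < (p.2.+1%:R^-1 : R) by rewrite invr_gt0 ltr0n.
  have [l [rl Nl fl]] := cv p _ npos (maxn p.2 (\max_(n <- s) n).+1).
  exists (codeL l).
    by exists l; split => //; split => //; apply: leq_trans Nl; exact: leq_maxl.
  apply/negP => ls; move: Nl; rewrite geq_max ltnNge => /andP[_ /negP]; apply.
  exact: (@leq_bigmax_seq _ _ xpredT (fun n => n)).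
have /choice[lp lpP] := cP.
exists lp; split=> [p p' /(congr1 codeL)|p|p|p]; try by have [_ []] := lpP p.
by rewrite !(proj1 (lpP _)) => /c_inj.
Qed.

Lemma target_col0 q1 q2 z m J : target q1 q2 z (m, J * 3)%N = z m.
Proof. by rewrite /target modnMl. Qed.

Lemma target_col1 q1 q2 z m J : target q1 q2 z (m, (J * 3).+1) = q1.
Proof. by rewrite /target -addn1 modnMDl. Qed.

Lemma target_col2 q1 q2 z m J : target q1 q2 z (m, (J * 3).+2) = q2.
Proof. by rewrite /target -addn2 modnMDl. Qed.

Section RowPoint.
Variables (q1 q2 : R) (z : nat -> R) (lp : nat * nat -> Lambda).
Hypotheses (q12 : q1 != q2) (z_inj : injective z) (lp_inj : injective lp)
  (lp_code : forall p, (p.2 <= codeL (lp p))%N)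
  (lp_near : forall p, `|f (lp p) - target q1 q2 z p| < p.2.+1%:R^-1).

Definition row_point (p : nat * nat) : Q01 := dyadic_code (lp p).

Lemma row_point_inj : injective row_point.
Proof. by move=> a b /dyadic_code_inj /lp_inj. Qed.

Lemma row_point_near p :
  `|q01r R (row_point p) - target q1 q2 z p| < 2 * p.2.+1%:R^-1.
Proof.
have h : (codeL (lp p)).+1%:R^-1 <= p.2.+1%:R^-1 :> R.
  by rewrite lef_pV2 ?posrE ?ltr0n // ler_nat ltnS.
rewrite mulr2n mulrDl mul1r; apply: le_lt_trans (ler_distD (f (lp p)) _ _) _.
exact: ler_ltD (le_trans (dyadic_code_dist _) h) (lp_near p).
Qed.

(* Every row has points near both [q1] and [q2], so no ball of radius
   [|q1 - q2| / 4] contains a tail of rows. *)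
Lemma row_point_escapes (p : R) : exists U : set R, [/\ open U, U p &
  forall n, ~ ((q01r R \o row_point) @` tail_rows n `<=` U)].
Proof.
set D := `|q1 - q2|; have D0 : 0 < D / 4 by rewrite divr_gt0 // normr_gt0 subr_eq0.
exists (ball p (D / 4)); split; [exact: ball_open|exact: ballxx|].
move=> n sub; have [J HJ] := double_inv_succ_lt D0.
have close k : (J <= k)%N -> `|p - q01r R (row_point (n.+1, k))| < D / 4 /\
    `|q01r R (row_point (n.+1, k)) - target q1 q2 z (n.+1, k)| < D / 4.
  move=> Jk; split; last exact: lt_trans (row_point_near (n.+1, k)) (HJ _ Jk).
  by rewrite -ballR_norm; apply: sub; exists (n.+1, k) => //; rewrite /tail_rows /=.
have [pa ha] := close (J * 3).+1 ltac:(lia); rewrite target_col1 in ha.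
have [pb hb] := close (J * 3).+2 ltac:(lia); rewrite target_col2 in hb.
move: pa ha pb hb; set xa := q01r R (row_point _); set xb := q01r R (row_point _).
have := ler_distD xa q1 q2; have := ler_distD p xa q2; have := ler_distD xb p q2.
rewrite -/D (distrC q1 xa) (distrC xa p); lra.
Qed.

Lemma row_point_column_cvg m :
  q01r R \o (fun r => row_point (m, r * 3)%N) @ \oo --> z m.
Proof.
apply/cvgrPdist_lt => e e0; have [J HJ] := double_inv_succ_lt e0.
exists J => // r /= Jr; rewrite distrC.
have := row_point_near (m, r * 3)%N; rewrite target_col0 => h.
by apply: lt_trans h (HJ _ _) => /=; lia.
Qed.

(* Row [m] contains an injective sequence converging to [z m], so no row [m]
   with [z m] outside the finitely many limits of a [conv] cover is covered. *)
Lemma row_point_not_conv n : ~ Defs.conv R (row_point @` tail_rows n).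
Proof.
move=> [k [s [scv scov]]]; have /choice[l sl] := scv.
have [m [nm zm]] := injective_avoid_finite l n z_inj.
have [|r|i li] := cover_by_convergent_limit sl _ (row_point_column_cvg (m := m)).
- by move=> a b /row_point_inj [] /eqP; rewrite eqn_mul2r => /eqP.
- by apply: scov; exists (m, r * 3)%N.
- by move: (zm i); rewrite li eqxx.
Qed.

Lemma row_point_good : goodX R row_point.
Proof.
split; [move=> p _; exact: row_point_escapes|exact: row_point_inj|].
exact: row_point_not_conv.
Qed.

End RowPoint.

Lemma katetov_branch :
  katetov_le (Fbar (branch (@xcode R))) (rho01 (branch (@xcode R))) FF rho.
Proof.
exists dyadic_code => F1 FF1.
have [F [FFF FF1s TAF]] := tail_avoiding_refine FF1.
have [q1 [q2 [q12 qc]]] := two_tail_cluster_values TAF.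
have [z [z_inj zc]] := injective_choice
  (P := fun m => cluster_value (rho (F `\` initial m)))
  (fun m s => cluster_value_notin s (FF_setD PR FFF (initial_finite m))).
have tc p : cluster_value (rho (F `\` initial p.1)) (target q1 q2 z p).
  rewrite /target; case: ifP => _; first exact: zc.
  by case: ifP => _; [exact: (qc _).1|exact: (qc _).2].
have [lp [lp_inj lp_tail lp_code lp_near]] := exists_row_choice FFF tc.
pose x : Xset R :=
  exist _ (row_point lp) (row_point_good q12 z_inj lp_inj lp_code lp_near).
exists (branch (@xcode R) x `\` set0); first by exists x, set0.
move=> K1 fK1; have [m Km] := finite_sub_initial fK1.
have [a Axa ma] := infinite_nat_unbounded (@branch_infinite _ (@xcode R) x) m.
exists [set a]; split => // q; rewrite setD0.
move=> /(rho01_setD1 (branch_almost_disjoint (@xcode_inj R)) Axa)[p ap <-].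
exists (lp p) => //; move: (lp_tail p).
apply: (rho_mono PR (FF_setD PR FFF (initial_finite p.1)) (FF_setD PR FF1 fK1)).
move=> w [Fw nw]; split; first exact: FF1s.
by move=> /Km /(initial_mono (leq_trans ma (ltnW ap))).
Qed.

End NotFinBW.

Lemma not_katetov_finBW01 (R : realType) :
  (forall A : Xset R -> set nat, almost_disjoint A ->
     ~ katetov_le (Fbar A) (rho01 A) FF rho) ->
  FinBW_on FF rho [set x : R | 0 <= x <= 1].
Proof.
move=> H f f01; apply: contrapT => ndiv.
apply: (H _ (branch_almost_disjoint (@xcode_inj R))).
apply: (katetov_branch f01) => F y FFF y01 cv; apply: ndiv.
by exists F => //; exists y.
Qed.

End Countable.

Section UnitInterval.
Variable R : realType.

Definition unit_itv : set R := [set x : R | 0 <= x <= 1].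

Lemma unit_itv_hausdorff : hausdorff_space (set_type unit_itv).
Proof.
move=> p q clpq; apply: val_inj; apply/eqP; apply: contrapT => /negP ne.
have d0 : 0 < `|val p - val q| / 2 by rewrite divr_gt0 // normr_gt0 subr_eq0.
have [w [pw qw]] := clpq _ _ (nbhsx_ballx p _ d0) (nbhsx_ballx q _ d0).
have : ball (val p) `|val p - val q| (val q) := ball_splitl pw qw.
by rewrite ballR_norm ltxx.
Qed.

Lemma unit_itv_compact : compact [set: set_type unit_itv].
Proof.
move=> G GF _.
have G01 : G (val @^-1` `[0, 1]%classic).
  by apply: filterS filterT => x _ /=; rewrite in_itv /=; have := valP x; rewrite inE.
have [y [y01 cly]] := @segment_compact R 0 1 (val @ G) _ G01.
have yI : y \in unit_itv by rewrite inE; move: y01; rewrite /= in_itv.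
exists (exist _ y yI); split => // A B GA /nbhs_ballP [e /= e0 bB].
have vA : G (val @^-1` (val @` A)) by apply: filterS GA => a Aa; exists a.
have [_ [[a Aa <-] ya]] := cly _ _ vA (nbhsx_ballx y e e0).
by exists a; split => //; apply: bB.
Qed.

Lemma finBW_unit_itv (Omega Lambda : Type) (FF : set (set Omega))
    (rho : set Omega -> set Lambda) :
  FinBW FF rho (set_type unit_itv) -> FinBW_on FF rho unit_itv.
Proof.
move=> bw f fI; pose fY l : set_type unit_itv := exist _ (f l) (mem_set (fI l)).
have [F FFF [yY _ cv]] := bw fY (fun=> I).
exists F => //; exists (val yY); first by have := valP yY; rewrite inE.
move=> U /nbhs_ballP [e /= e0 bU].
have [K [fK sub]] := cv _ (nbhsx_ballx yY e e0).
by exists K; split => // _ [l rl <-]; apply: bU; apply: (sub (fY l)); exists l.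
Qed.

End UnitInterval.

Unset Implicit Arguments.

Theorem theorem6p6 (R : realType) (Omega Lambda : Type)
    (FF : set (set Omega)) (rho : set Omega -> set Lambda) :
  countably_infinite Omega -> countably_infinite Lambda ->
  partition_regular FF rho ->
  ((forall Y : pseudoMetricType R, hausdorff_space Y ->
      (FinBW FF rho Y <-> compact [set: Y]))
   <-> FinBW_on FF rho [set x : R | 0 <= x <= 1]) /\
  (FinBW_on FF rho [set x : R | 0 <= x <= 1]
   <-> (forall A : Xset R -> set nat, almost_disjoint A ->
          ~ katetov_le (Fbar A) (rho01 A) FF rho)).
Proof.
move=> cO cL PR; split; split.
- move=> H; apply: finBW_unit_itv; apply/(H _ (@unit_itv_hausdorff R)).
  exact: unit_itv_compact.
- move=> bw Y hY; split; first exact: (finBW_compact cL PR).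
  by move=> cY; apply: compact_finBW.
- by move=> bw A _; apply: finBW01_not_katetov.
- exact: not_katetov_finBW01.
Qed.
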